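(* Let $K$ be a non-archimedean local field and let $\{g_n\}$ be a sequence in $\mathrm{SL}_2(K)$ such that each cyclic group $\langle g_n\rangle$ is discrete. If $g_n$ converges to an elliptic element $g\in\mathrm{SL}_2(K)$, then the sequence $\{\mathrm{tr}(g_n)\}$ is eventually constant.
   Context: $\mathrm{SL}_2(K)$ has the subspace topology from $K^4$ and acts by isometries on its Bruhat–Tits tree $T_K$; an element is elliptic if it fixes a vertex of $T_K$. *)

From HB Require Import structures.
From mathcomp Require Import all_boot all_order all_algebra.
Set Implicit Arguments. Unset Strict Implicit. Unset Printing Implicit Defensive.
Import Order.TTheory GRing.Theory Num.Theory.
Local Open Scope ring_scope.

Section LocalField.
Variables (K : fieldType) (v : K -> int).

(* v is a normalized discrete valuation on K^x; its value at 0 is irrelevant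
   (0 plays the role of +oo everywhere below). *)

Definition inO (x : K) : Prop := x = 0 \/ (0 <= v x).

Definition vsmall (N : int) (x : K) : Prop := x = 0 \/ (N <= v x).

Definition vconv (x : nat -> K) (l : K) : Prop :=
  forall N : int, exists M : nat, forall n, (M <= n)%N -> vsmall N (x n - l).

Definition vcauchy (x : nat -> K) : Prop :=
  forall N : int, exists M : nat, forall m n, (M <= m)%N -> (M <= n)%N ->
    vsmall N (x m - x n).

(* K is a non-archimedean local field with normalized valuation v :
   a field complete w.r.t. a (nontrivial, normalized) discrete valuation
   with finite residue field O/m. *)
Definition nonarch_local_field : Prop :=
  [/\ (forall x y, x != 0 -> y != 0 -> v (x * y) = v x + v y),
      (forall x y, x != 0 -> y != 0 -> x + y != 0 ->
          Order.min (v x) (v y) <= v (x + y)),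
      (forall n : int, exists x, x != 0 /\ v x = n),
      (forall x : nat -> K, vcauchy x -> exists l, vconv x l) &
      (exists s : seq K, (forall y, y \in s -> inO y) /\
          forall x, inO x -> exists2 y, y \in s & vsmall 1 (x - y))].

Definition mx_conv (gs : nat -> 'M[K]_2) (g : 'M[K]_2) : Prop :=
  forall i j, vconv (fun n => gs n i j) (g i j).

Definition cyclic_sub (g : 'M[K]_2) : 'M[K]_2 -> Prop :=
  fun h => exists k : int, h = g ^ k.

(* a set H of matrices is discrete in the subspace topology from K^4 *)
Definition discrete_set (H : 'M[K]_2 -> Prop) : Prop :=
  forall h, H h -> exists N : int, forall h', H h' ->
    (forall i j, vsmall N (h' i j - h i j)) -> h' = h.

(* the O-lattice M O^2 in K^2 spanned by the columns of an invertible M *)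
Definition lattice (M : 'M[K]_2) : 'cV[K]_2 -> Prop :=
  fun x => exists y : 'cV[K]_2, (forall i, inO (y i 0)) /\ x = M *m y.

(* g fixes the vertex [M O^2] of the Bruhat-Tits tree: g L = c L for some c *)
Definition fixes_vertex (g M : 'M[K]_2) : Prop :=
  exists c : K, c != 0 /\ forall x : 'cV[K]_2,
    (exists2 y, lattice M y & x = g *m y) <-> (exists2 y, lattice M y & x = c *: y).

Definition elliptic (g : 'M[K]_2) : Prop :=
  exists M : 'M[K]_2, M \in unitmx /\ fixes_vertex g M.

End LocalField.

(* 1. An elliptic g in SL_2(K) has integral trace: if g M O^2 = c M O^2 then
      g M = c M Z with Z in GL_2(O), and det g = 1 forces v(c) = 0.
   2. (Uniform torsion.) Write A^k = a_k(t) A - a_(k-1)(t) for det A = 1,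
      tr A = t (Chebyshev polynomials a_k). There is L > 0, depending only on
      K, such that a_L(tr h) = 0 for every non-scalar h in SL_2(K) with
      integral trace, bounded entries and discrete <h>. Indeed the companion
      matrix C of t = tr h has a power C^r = 1 mod pi with r bounded
      (finite residue field); raising it to the powers n0^k of an integer
      n0 in pi O brings C^m, hence h^m, arbitrarily close to 1, so h^m = 1 by
      discreteness, so C^m = 1; and torsion in the first congruence subgroup
      has bounded exponent (via Frobenius in characteristic p, via the
      valuation of n0 in characteristic 0).
   3. Hence the traces tr g_n, which converge to tr g, are eventually roots of
      the nonzero polynomial a_L(X) (X^2 - 4) (scalar elements of SL_2 have
      trace +-2); finitely many roots are uniformly separated, so the traces
      are eventually constant. *)

From HB Require Import structures.
From mathcomp Require Import all_boot all_order all_algebra.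
From mathcomp Require Import zify ring.
From Stdlib Require Import Classical ClassicalEpsilon.
Set Implicit Arguments.
Unset Strict Implicit.
Unset Printing Implicit Defensive.
Import Order.TTheory GRing.Theory Num.Theory.
Local Open Scope ring_scope.

Lemma pigeonhole {T : eqType} {S : seq T} {F : nat -> T} :
  (forall k, F k \in S) -> exists i j, (i < j <= size S)%N /\ F i = F j.
Proof.
move=> FS; set L := map F (iota 0 (size S).+1).
have : ~~ uniq L.
  apply/negP => uL; have sLS : {subset L <= S} by move=> x /mapP [k _ ->].
  by have := uniq_leq_size uL sLS; rewrite size_map size_iota ltnn.
case/(uniqPn (F 0)) => i [j [ij jL eFij]].
have jS : (j <= size S)%N by move: jL; rewrite size_map size_iota.
exists i, j; split; first by rewrite ij.
by move: eFij; rewrite /L !(nth_map 0) ?size_iota ?nth_iota //; lia.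
Qed.

Lemma poly_roots_finite (K : fieldType) (p : {poly K}) : p != 0 ->
  exists l : seq K, forall x, root p x -> x \in l.
Proof.
move: {2}(size p) (leqnn (size p)) => n; elim: n p => [|n IH] p sp p0.
  by move: p0; rewrite -size_poly_eq0; move: sp; rewrite leqn0 => ->.
case: (classic (exists x, root p x)) => [[x /factor_theorem [q def_p]]|noroot]; last first.
  by exists [::] => x rx; case: noroot; exists x.
have q0 : q != 0 by apply: contraNneq p0 => q0; rewrite def_p q0 mul0r.
have sq : (size q <= n)%N.
  by move: sp; rewrite def_p size_Mmonic ?monicXsubC // size_XsubC addn2 ltnS.
have [l hl] := IH q sq q0.
exists (x :: l) => y; rewrite def_p rootM root_XsubC inE => /orP [/hl ->|->];
  by rewrite ?orbT.
Qed.

(* cheb t k = (a_k, a_(k-1)) for the recurrence a_(k+1) = t a_k - a_(k-1),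
   a_0 = 0, a_(-1) = -1; a_k(t) is a Chebyshev polynomial of the second kind.
   It expresses the powers of any matrix with A^2 = t A - 1, see pow_cheb. *)
Fixpoint cheb {R : pzRingType} (t : R) (k : nat) : R * R :=
  if k is k'.+1 then (t * (cheb t k').1 - (cheb t k').2, (cheb t k').1) else (0, -1).

Section TwoByTwo.
Variable R : comNzRingType.
Implicit Types (A B : 'M[R]_2) (t : R).

Lemma ord2P (i : 'I_2) : i = 0 \/ i = 1.
Proof. by case: i => [[|[|n]]] // ?; [left|right]; apply: val_inj. Qed.

Lemma sum2 (V : zmodType) (F : 'I_2 -> V) : \sum_(i < 2) F i = F 0 + F 1.
Proof. by rewrite !big_ord_recr big_ord0 /= add0r; congr (F _ + F _); apply: val_inj. Qed.

Lemma det2 A : \det A = A 0 0 * A 1 1 - A 0 1 * A 1 0.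
Proof.
rewrite (expand_det_row _ 0) sum2 /cofactor !det_mx11 !mxE /=.
have -> : lift 0 0 = 1 :> 'I_2 by apply: val_inj.
have -> : lift 1 0 = 0 :> 'I_2 by apply: val_inj.
by rewrite expr0 expr1 !mul1r mulN1r mulrN.
Qed.

Lemma tr2 A : \tr A = A 0 0 + A 1 1.
Proof. by rewrite /mxtrace sum2. Qed.

Lemma mul2E A B i j : (A * B) i j = A i 0 * B 0 j + A i 1 * B 1 j.
Proof. by rewrite -mulmxE mxE sum2. Qed.

Lemma cayley_hamilton2 A : A * A = \tr A *: A - \det A *: 1.
Proof.
apply/matrixP => i j; rewrite mul2E !mxE tr2 det2.
by case: (ord2P i) => ->; case: (ord2P j) => ->; rewrite /= ?mulr1n ?mulr0n; ring.
Qed.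

Lemma pow_cheb {A t} : A * A = t *: A - 1 ->
  forall k, A ^+ k = (cheb t k).1 *: A - (cheb t k).2 *: 1.
Proof.
move=> sqA; elim => [|k IH] /=; first by rewrite expr0 scale0r sub0r scaleN1r opprK.
rewrite exprSr IH mulrBl -!scalerAl sqA mul1r scalerBr scalerA.
by rewrite scalerBl mulrC -!addrA; congr (_ + _); rewrite addrC.
Qed.

Lemma cheb_horner t k :
  ((cheb 'X k).1).[t] = (cheb t k).1 /\ ((cheb 'X k).2).[t] = (cheb t k).2.
Proof.
elim: k => [|k [IH1 IH2]] /=; first by rewrite hornerN !hornerC.
by rewrite hornerD hornerN hornerM hornerX IH1 IH2.
Qed.

Lemma cheb_monic k : (0 < k)%N ->
  (cheb ('X : {poly R}) k).1 \is monic /\ size (cheb ('X : {poly R}) k).1 = k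
  /\ (size (cheb ('X : {poly R}) k).2 < k)%N.
Proof.
elim: k => [//|[|k] IH] _ /=.
  by rewrite mulr0 sub0r opprK monic1 size_poly1 size_polyC eqxx.
have [mon_a [sz_a sz_b]] := IH isT.
move: mon_a sz_a sz_b; set a := (cheb 'X k.+1).1; set b := (cheb 'X k.+1).2.
move=> mon_a sz_a sz_b; have a0 : a != 0 by apply: monic_neq0.
have sz_Xa : size ('X * a) = k.+2 by rewrite mulrC size_mulX // sz_a.
have lt_b : (size (- b) < size ('X * a)%R)%N by rewrite size_polyN sz_Xa; lia.
split; last by rewrite size_polyDl // sz_Xa sz_a.
by rewrite monicE lead_coefDl // mulrC lead_coefMX; apply/eqP/monicP.
Qed.

Definition companion t : 'M[R]_2 :=
  \matrix_(i, j) if i == 0 then (if j == 0 then 0 else -1)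
                 else (if j == 0 then 1 else t).

Lemma companion_sq t : companion t * companion t = t *: companion t - 1.
Proof.
rewrite cayley_hamilton2 tr2 det2 !mxE /= add0r mul0r sub0r mulN1r opprK.
by rewrite scale1r.
Qed.

Lemma companion_pow t k :
  (companion t ^+ k) 1 0 = (cheb t k).1 /\ (companion t ^+ k) 0 0 = - (cheb t k).2.
Proof.
by rewrite (pow_cheb (companion_sq t)) !mxE /= !mulr1 !mulr0 subr0 sub0r.
Qed.

End TwoByTwo.
Arguments companion {R}.
Arguments companion_pow {R}.
Arguments pow_cheb {R A t}.
Arguments companion_sq {R}.

Section TwoByTwoField.
Variable K : fieldType.
Implicit Types (h u w : 'M[K]_2).

Definition scalar2 h := h 0 1 = 0 /\ h 1 0 = 0 /\ h 0 0 = h 1 1.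

Lemma scalar2_trace h : scalar2 h -> \det h = 1 -> (\tr h) ^+ 2 = 4.
Proof.
move=> [h01 [h10 h00]]; rewrite det2 tr2 h01 h10 -h00 mul0r subr0 => deth.
have -> : (h 0 0 + h 0 0) ^+ 2 = 4 * (h 0 0 * h 0 0) by ring.
by rewrite deth mulr1.
Qed.

Lemma nonscalar_indep h a c : ~ scalar2 h -> a *: h - c *: 1 = 0 -> a = 0 /\ c = 0.
Proof.
move=> nsh e.
have := congr1 (fun X : 'M[K]_2 => (X 0 1, X 1 0, X 0 0, X 1 1)) e.
rewrite !mxE /= ?mulr1n ?mulr0n ?mulr1 ?mulr0 ?subr0 => -[e01 e10 e00 e11].
have a0 : a = 0.
  have [//|a0] := eqVneq a 0; case: nsh.
  move/eqP: e01; rewrite mulf_eq0 (negbTE a0) => /eqP h01.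
  move/eqP: e10; rewrite mulf_eq0 (negbTE a0) => /eqP h10.
  by do 2!split => //; apply: (mulfI a0); apply: (addIr (- c)); rewrite e00 e11.
by split => //; move/eqP: e00; rewrite a0 mul0r sub0r oppr_eq0 => /eqP.
Qed.

Lemma nilpotent2 w N : (0 < N)%N -> w ^+ N = 0 -> w * w = 0.
Proof.
move=> N0 wN.
have detw : \det w = 0.
  have detX k : \det (w ^+ k) = \det w ^+ k.
    by elim: k => [|k IH]; rewrite ?det1 // !exprS -mulmxE det_mulmx IH.
  by have /eqP := congr1 determinant wN; rewrite detX det0 expf_eq0 N0 => /eqP.
have sqw : w * w = \tr w *: w by rewrite cayley_hamilton2 detw scale0r subr0.
have powS k : w ^+ k.+1 = \tr w ^+ k *: w.
  elim: k => [|k IH]; first by rewrite expr1 expr0 scale1r.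
  by rewrite exprSr IH -scalerAl sqw scalerA -exprSr.
move: wN; case: N N0 => // k _; rewrite powS => /eqP; rewrite scaler_eq0 expf_eq0.
by case/orP => [/andP [_ /eqP t0]|/eqP ->]; rewrite ?sqw ?t0 ?scale0r ?mul0r.
Qed.

Lemma pchar_pow_add1 (p : nat) : p \in [pchar K] -> forall w k,
  (1 + w) ^+ (p ^ k) = 1 + w ^+ (p ^ k).
Proof.
move=> pK; have pM : p \in [pchar 'M[K]_2].
  move: pK; rewrite !inE => /andP [pp /eqP p0]; rewrite pp /=.
  by rewrite -(rmorph_nat (@scalar_mx K 2)) p0 raddf0.
move=> w; elim => [|k IH]; first by rewrite expn0 !expr1.
rewrite expnSr !exprM IH.
have := pFrobenius_autD_comm pM (commr1 (w ^+ (p ^ k))).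
by rewrite !pFrobenius_autE expr1n addrC [_ + 1]addrC.
Qed.

Lemma pchar_torsion (p : nat) u k : p \in [pchar K] -> u ^+ (p ^ k) = 1 -> u ^+ p = 1.
Proof.
move=> pK; have pp : prime p by move: pK; rewrite inE => /andP [].
have defu : u = 1 + (u - 1) by rewrite addrC subrK.
rewrite defu pchar_pow_add1 // => /(congr1 (fun X => X - 1)); rewrite addrC addKr subrr.
have pk_gt0 : (0 < p ^ k)%N by rewrite expn_gt0 prime_gt0.
move/(nilpotent2 pk_gt0) => sq0.
rewrite -(expn1 p) pchar_pow_add1 // expn1.
have -> : p = ((p - 2) + 2)%N by have := prime_gt1 pp; lia.
by rewrite exprD expr2 sq0 mulr0 addr0.
Qed.

End TwoByTwoField.
Arguments scalar2 {K}.
Arguments nonscalar_indep {K h a c}.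
Arguments pchar_torsion {K p u k}.

Section ValuedField.
Variables (K : fieldType) (v : K -> int).
Hypothesis v_mul : forall x y, x != 0 -> y != 0 -> v (x * y) = v x + v y.
Hypothesis v_add : forall x y, x != 0 -> y != 0 -> x + y != 0 ->
  Order.min (v x) (v y) <= v (x + y).
Implicit Types (x y c t : K) (N : int) (A B M X Y Z W g h : 'M[K]_2).

Lemma v1 : v 1 = 0.
Proof. by have := @v_mul 1 1 (oner_neq0 _) (oner_neq0 _); rewrite mulr1; lia. Qed.

Lemma vN x : v (- x) = v x.
Proof.
have N10 : (-1 : K) != 0 by rewrite oppr_eq0 oner_neq0.
have vN1 : v (-1) = 0 by have := v_mul N10 N10; rewrite mulrNN mulr1 v1; lia.
have [->|x0] := eqVneq x 0; first by rewrite oppr0.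
by rewrite -mulN1r v_mul // vN1 add0r.
Qed.

(* Arithmetic of the ideals pi^N O, where "vsmall N x" means x \in pi^N O. *)
Lemma vsmallW {N N' x} : vsmall v N x -> N' <= N -> vsmall v N' x.
Proof. by move=> [->|xN] N'N; [left | right; apply: le_trans xN]. Qed.

Lemma vsmallN {N x} : vsmall v N x -> vsmall v N (- x).
Proof. by move=> [->|xN]; [left; rewrite oppr0 | right; rewrite vN]. Qed.

Lemma vsmallD {N x y} : vsmall v N x -> vsmall v N y -> vsmall v N (x + y).
Proof.
move=> [->|xN]; first by rewrite add0r.
move=> [->|yN]; first by rewrite addr0; right.
have [->|x0] := eqVneq x 0; first by rewrite add0r; right.
have [->|y0] := eqVneq y 0; first by rewrite addr0; right.
have [|xy0] := eqVneq (x + y) 0; first by left.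
by right; apply: le_trans (v_add x0 y0 xy0); rewrite le_min xN yN.
Qed.

Lemma vsmallB {N x y} : vsmall v N x -> vsmall v N y -> vsmall v N (x - y).
Proof. by move=> xN yN; apply: vsmallD => //; apply: vsmallN. Qed.

Lemma vsmallM {N N' x y} : vsmall v N x -> vsmall v N' y -> vsmall v (N + N') (x * y).
Proof.
move=> [->|xN]; first by rewrite mul0r; left.
move=> [->|yN]; first by rewrite mulr0; left.
have [->|x0] := eqVneq x 0; first by rewrite mul0r; left.
have [->|y0] := eqVneq y 0; first by rewrite mulr0; left.
by right; rewrite v_mul //; apply: lerD.
Qed.

Lemma vsmallMn {N x} n : vsmall v N x -> vsmall v N (x *+ n).
Proof.
move=> xN; elim: n => [|n IH]; first by rewrite mulr0n; left.
by rewrite mulrS; apply: vsmallD.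
Qed.

Lemma vsmall_sub_trans {N x y z} :
  vsmall v N (x - z) -> vsmall v N (y - z) -> vsmall v N (x - y).
Proof. by move=> xz yz; have := vsmallB xz yz; rewrite opprB addrA subrK. Qed.

Lemma vsmall_nat (n : nat) : vsmall v 0 (n%:R : K).
Proof. by apply: vsmallMn; right; rewrite v1. Qed.

Lemma vsmall_exact x : x != 0 -> ~ vsmall v (v x + 1) x.
Proof. by move=> x0 [x0'|]; [move: x0; rewrite x0' eqxx | lia]. Qed.

Definition msmall N A := forall i j, vsmall v N (A i j).

Lemma msmall_entries {N A} :
  vsmall v N (A 0 0) -> vsmall v N (A 0 1) -> vsmall v N (A 1 0) ->
  vsmall v N (A 1 1) -> msmall N A.
Proof. by move=> ? ? ? ? i j; case: (ord2P i) => ->; case: (ord2P j) => ->. Qed.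

Lemma msmall_eq0 A : (forall N, msmall N A) -> A = 0.
Proof.
move=> As; apply/matrixP => i j; rewrite mxE.
by case: (As (v (A i j) + 1) i j) => // ?; lia.
Qed.

Lemma msmall0 N : msmall N 0.
Proof. by move=> i j; rewrite mxE; left. Qed.

Lemma msmall1 : msmall 0 1.
Proof.
by move=> i j; rewrite mxE; case: (i == j); [right; rewrite v1 | left].
Qed.

Lemma msmallW {N N' A} : msmall N A -> N' <= N -> msmall N' A.
Proof. by move=> AN N'N i j; apply: vsmallW (AN i j) N'N. Qed.

Lemma msmallD {N A B} : msmall N A -> msmall N B -> msmall N (A + B).
Proof. by move=> AN BN i j; rewrite mxE; apply: vsmallD. Qed.

Lemma msmallB {N A B} : msmall N A -> msmall N B -> msmall N (A - B).
Proof. by move=> AN BN i j; rewrite !mxE; apply: vsmallB. Qed.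

Lemma msmallMn {N A} n : msmall N A -> msmall N (A *+ n).
Proof. by move=> AN i j; rewrite mulmxnE; apply: vsmallMn. Qed.

Lemma msmallM {N N' A B} : msmall N A -> msmall N' B -> msmall (N + N') (A * B).
Proof. by move=> AN BN i j; rewrite mul2E; apply: vsmallD; apply: vsmallM. Qed.

Lemma msmallZ {N N' x A} : vsmall v N x -> msmall N' A -> msmall (N + N') (x *: A).
Proof. by move=> xN AN i j; rewrite mxE; apply: vsmallM. Qed.

Lemma msmallX {A} k : msmall 0 A -> msmall 0 (A ^+ k).
Proof.
move=> A0; elim: k => [|k IH]; first by rewrite expr0; exact: msmall1.
by rewrite exprS; have := msmallM A0 IH; rewrite addr0.
Qed.

Lemma binomial_small {j w} n : 0 <= j -> msmall j w ->
  msmall (j + j) ((1 + w) ^+ n - 1 - w *+ n).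
Proof.
move=> j0 wj; elim: n => [|n IH].
  by rewrite expr0 mulr0n subrr subr0; exact: msmall0.
have -> : (1 + w) ^+ n.+1 - 1 - w *+ n.+1 =
   (1 + w) * ((1 + w) ^+ n - 1 - w *+ n) + (w * w) *+ n.
  rewrite exprS !mulrBr mulr1 mulrnAr mulrDl mul1r mulrS.
  by rewrite [(1 + w) * w]mulrDl mul1r mulrnDl !opprD !addrA addrNK.
apply: msmallD; last by apply: msmallMn; apply: msmallM.
have w1 : msmall 0 (1 + w) by apply: msmallD; [exact: msmall1 | exact: msmallW wj _].
by have := msmallM w1 IH; rewrite add0r.
Qed.

Lemma integral_det {Z} : (forall i j, inO v (Z i j)) -> inO v (\det Z).
Proof.
move=> Zint; have Zmul i j k l : vsmall v 0 (Z i j * Z k l).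
  by have := vsmallM (Zint i j) (Zint k l); rewrite addr0.
by rewrite det2; apply: vsmallB.
Qed.

Lemma integral_inverse_det {Z W} : (forall i j, inO v (Z i j)) ->
  (forall i j, inO v (W i j)) -> Z *m W = 1%:M -> \det Z != 0 /\ v (\det Z) = 0.
Proof.
move=> Zint Wint ZW1.
have dZW : \det Z * \det W = 1 by rewrite -det_mulmx ZW1 det1.
have dZ0 : \det Z != 0 by apply: contra_eq_neq dZW => ->; rewrite mul0r eq_sym oner_neq0.
have dW0 : \det W != 0 by apply: contra_eq_neq dZW => ->; rewrite mulr0 eq_sym oner_neq0.
have := v_mul dZ0 dW0; rewrite dZW v1.
case: (integral_det Zint) => [dZ0'|]; first by move: dZ0; rewrite dZ0' eqxx.
case: (integral_det Wint) => [dW0'|]; first by move: dW0; rewrite dW0' eqxx.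
by split => //; lia.
Qed.

Lemma lattice_col M j : lattice v M (M *m delta_mx j 0).
Proof.
exists (delta_mx j 0); split=> // i; rewrite mxE.
by case: (_ && _); [right; rewrite /= v1 | left].
Qed.

Lemma integral_columns {X Y} :
  (forall j, exists z : 'cV[K]_2,
     (forall i, inO v (z i 0)) /\ X *m delta_mx j 0 = Y *m z) ->
  exists Z, (forall i j, inO v (Z i j)) /\ X = Y *m Z.
Proof.
move=> /fin_all_exists [z zP]; exists (\matrix_(i, j) z j i 0); split.
  by move=> i j; rewrite mxE; case: (zP j).
apply/matrixP => i j; case: (zP j) => _ /(congr1 (fun C : 'cV[K]_2 => C i 0)).
by rewrite -colE mxE => ->; rewrite !mxE; apply: eq_bigr => k _; rewrite mxE.
Qed.

Lemma stable_lattice_integral {g M c} :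
  (forall x : 'cV[K]_2, (exists2 y, lattice v M y & x = g *m y) <->
             (exists2 y, lattice v M y & x = c *: y)) ->
  (exists Z, (forall i j, inO v (Z i j)) /\ g *m M = (c *: M) *m Z) /\
  (exists W, (forall i j, inO v (W i j)) /\ c *: M = (g *m M) *m W).
Proof.
move=> fixL; split; apply: integral_columns => j.
- have [_ [z [zint ->]] e] := (fixL (g *m (M *m delta_mx j 0))).1
    (ex_intro2 _ _ _ (lattice_col M j) erefl).
  by exists z; split=> //; rewrite -mulmxA e scalemxAl.
- have [_ [z [zint ->]] e] := (fixL (c *: (M *m delta_mx j 0))).2
    (ex_intro2 _ _ _ (lattice_col M j) erefl).
  by exists z; split=> //; rewrite -scalemxAl e mulmxA.
Qed.

(* An elliptic element of SL_2(K) has integral trace: writing g M = c M Z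
   with M invertible and Z in GL_2(O), det g = 1 forces c^2 det Z = 1, so c is
   a unit and tr g = c tr Z is integral. *)
Lemma elliptic_trace_integral g : \det g = 1 -> elliptic v g -> inO v (\tr g).
Proof.
move=> detg [M [Mu [c [c0 fixL]]]].
have [[Z [Zint gMZ]] [W [Wint gMW]]] := stable_lattice_integral fixL.
have M0 : \det M != 0 by rewrite -unitfE -unitmxE.
have ZW1 : Z *m W = 1%:M.
  have cMfull : row_full (c *: M) by rewrite row_full_unit unitmxZ ?unitfE.
  by apply: (row_full_inj cMfull); rewrite mulmxA -gMZ -gMW mulmx1.
have [dZ0 vdZ] := integral_inverse_det Zint Wint ZW1.
have c2dZ : c ^+ 2 * \det Z = 1.
  have := congr1 determinant gMZ; rewrite !det_mulmx detg mul1r detZ.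
  by move/(congr1 (fun x => x / \det M)); rewrite divff // => ->; field.
have vc : v c = 0.
  have := congr1 v c2dZ; rewrite v1 v_mul ?expf_neq0 // expr2 v_mul // vdZ; lia.
have -> : g = c *: (M *m Z) *m invmx M by rewrite scalemxAl -gMZ mulmxK.
rewrite -scalemxAl mxtraceZ -mulmxA mxtrace_mulC mulmxKV //.
have c_unit : vsmall v 0 c by right; rewrite vc.
have trZ : inO v (\tr Z) by rewrite tr2; apply: vsmallD; apply: Zint.
exact: (vsmallM c_unit trZ).
Qed.

Lemma pow_sub1E (u : 'M[K]_2) n :
  u ^+ n - 1 = ((1 + (u - 1)) ^+ n - 1 - (u - 1) *+ n) + (u - 1) *+ n.
Proof. by rewrite [1 + _]addrC !subrK. Qed.

Lemma msmall_natM {N N'} (n : nat) A :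
  vsmall v N n%:R -> msmall N' A -> msmall (N' + N) (A *+ n).
Proof. by move=> nN AN' i j; rewrite mulmxnE -mulr_natl addrC; apply: vsmallM. Qed.

Lemma pow_congr_step (n0 : nat) j (u : 'M[K]_2) : vsmall v 1 n0%:R -> 1 <= j ->
  msmall j (u - 1) -> msmall (j + 1) (u ^+ n0 - 1).
Proof.
move=> n0_small j1 uj; rewrite pow_sub1E.
apply: msmallD; last exact: msmall_natM.
by apply: msmallW (binomial_small n0 _ uj) _; lia.
Qed.

Lemma pow_congr_iter {n0 : nat} {u : 'M[K]_2} : vsmall v 1 n0%:R ->
  msmall 1 (u - 1) -> forall k : nat, msmall (k%:Z + 1) (u ^+ (n0 ^ k) - 1).
Proof.
move=> n0_small u1; elim => [|k IH]; first by rewrite expn0 expr1 add0r.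
rewrite expnSr exprM; have -> : k.+1%:Z + 1 = k%:Z + 1 + 1 by lia.
by apply: pow_congr_step => //; lia.
Qed.

Definition mlevel j A := msmall j A /\ ~ msmall (j + 1) A.

Lemma mlevel_exists {A J} : A != 0 -> msmall J A -> exists2 j, J <= j & mlevel j A.
Proof.
move=> A0 AJ; have [N AnotN] : exists N, ~ msmall N A.
  apply: NNPP => allN; move/eqP: A0; apply; apply: msmall_eq0 => N.
  by apply: NNPP => AnotN; apply: allN; exists N.
suff [d [Ad Ad1]] : exists d : nat, msmall (J + d%:Z) A /\ ~ msmall (J + d%:Z + 1) A.
  by exists (J + d%:Z) => //; lia.
have : ~ msmall (J + `|N - J|%N%:Z) A by move=> AN; apply: AnotN; apply: msmallW AN _; lia.
elim: `|N - J|%N => [|D IH] AnotD; first by rewrite addr0 in AnotD.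
case: (classic (msmall (J + D%:Z) A)) => [AD|]; last exact: IH.
by exists D; split => //; have -> : J + D%:Z + 1 = J + D.+1%:Z by lia.
Qed.

Lemma pow_level_step (n0 : nat) j (u : 'M[K]_2) :
  (n0%:R : K) != 0 -> 1 <= v n0%:R -> v n0%:R + 1 <= j ->
  mlevel j (u - 1) -> mlevel (j + v n0%:R) (u ^+ n0 - 1).
Proof.
move=> n00 V1 Vj [uj unotj1]; rewrite pow_sub1E.
set V := v n0%:R in V1 Vj *; set w := u - 1 in uj unotj1 *.
have j0 : 0 <= j by lia.
have quad := binomial_small n0 j0 uj.
have nw : msmall (j + V) (w *+ n0) by apply: msmall_natM => //; right.
split; first by apply: msmallD => //; apply: msmallW quad _; lia.
move=> level1; apply: unotj1 => i k.
have nw1 : msmall (j + V + 1) (w *+ n0).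
  set X := (1 + w) ^+ n0 - 1 - w *+ n0 in quad level1 *.
  have -> : w *+ n0 = (X + w *+ n0) - X by rewrite addrC addKr.
  by apply: msmallB => //; apply: msmallW quad _; lia.
have := nw1 i k; rewrite mulmxnE -mulr_natl.
have [->|w0] := eqVneq (w i k) 0; first by left.
move=> [|]; first by move/eqP; rewrite mulf_eq0 (negbTE n00) (negbTE w0).
rewrite v_mul // -/V => lvl; right; move: lvl; set z := v (w i k); clearbody V z; lia.
Qed.

Lemma pow_level_ne1 {n0 : nat} k {j} {u : 'M[K]_2} :
  (n0%:R : K) != 0 -> 1 <= v n0%:R -> v n0%:R + 1 <= j -> mlevel j (u - 1) ->
  u ^+ (n0 ^ k) != 1.
Proof.
move=> n00 V1; elim: k j u => [|k IH] j u Vj uj.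
  by rewrite expn0 expr1; apply/eqP => u1; apply: uj.2; rewrite u1 subrr; exact: msmall0.
rewrite expnS exprM; apply: (IH (j + v n0%:R)) => //; first lia.
exact: pow_level_step.
Qed.

Lemma pow_torsion_bound (n0 : nat) (u : 'M[K]_2) :
  (n0%:R : K) != 0 -> 1 <= v n0%:R -> msmall 1 (u - 1) ->
  (exists k, u ^+ (n0 ^ k) = 1) -> u ^+ (n0 ^ `|v n0%:R|) = 1.
Proof.
move=> n00 V1 u1 [k uk]; set u' := u ^+ (n0 ^ `|v n0%:R|).
have n0_small : vsmall v 1 n0%:R by right.
have [//|u'1] := eqVneq u' 1.
have u'1' : u' - 1 != 0 by rewrite subr_eq0.
have [j Vj u'j] := mlevel_exists u'1' (pow_congr_iter n0_small u1 `|v n0%:R|%N).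
have Vj' : v n0%:R + 1 <= j by move: Vj; rewrite gez0_abs //; lia.
have := pow_level_ne1 k n00 V1 Vj' u'j.
by rewrite /u' -exprM mulnC exprM uk expr1n eqxx.
Qed.

Variable s : seq K.
Hypothesis s_res : forall x, inO v x -> exists2 y, y \in s & vsmall v 1 (x - y).

Lemma residue_rep : exists rep : K -> K,
  forall x, inO v x -> rep x \in s /\ vsmall v 1 (x - rep x).
Proof.
have rep_at x : exists y, inO v x -> y \in s /\ vsmall v 1 (x - y).
  case: (classic (inO v x)) => [/s_res [y ys xy]|xO]; first by exists y.
  by exists x.
exists (fun x => sval (constructive_indefinite_description _ (rep_at x))).
by move=> x; exact: (svalP (constructive_indefinite_description _ (rep_at x))).
Qed.

(* Some positive integer n0 lies in pi O (the residue field is finite). *)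
Lemma residue_char_nat : exists2 n0 : nat, (0 < n0)%N & vsmall v 1 n0%:R.
Proof.
have [rep repP] := residue_rep.
have repS k : rep k%:R \in s by exact: (repP _ (vsmall_nat k)).1.
have [i [j [/andP [ij _] rep_ij]]] := pigeonhole repS.
exists (j - i)%N; first lia.
rewrite natrB; last lia.
apply: (vsmall_sub_trans (z := rep i%:R)); last exact: (repP _ (vsmall_nat i)).2.
by rewrite rep_ij; exact: (repP _ (vsmall_nat j)).2.
Qed.

Lemma congruence_torsion : exists n0 E : nat,
  [/\ vsmall v 1 n0%:R, (0 < E)%N & forall u : 'M[K]_2, msmall 1 (u - 1) ->
      (exists k, u ^+ (n0 ^ k) = 1) -> u ^+ E = 1].
Proof.
case: (classic (exists p, p \in [pchar K])) => [[p pK]|no_pchar].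
  have pp : prime p by move: pK; rewrite inE => /andP [].
  exists p, p; split; [by left; exact: pcharf0 | exact: prime_gt0 |].
  by move=> u _ [k uk]; exact: pchar_torsion uk.
have [n0 n0_gt0 n0_small] := residue_char_nat.
have n00 : (n0%:R : K) != 0.
  by apply/negP => n0_0; apply: no_pchar; exact: natf0_pchar n0_gt0 n0_0.
have V1 : 1 <= v n0%:R by case: n0_small => // n0_0; move: n00; rewrite n0_0 eqxx.
exists n0, (n0 ^ `|v n0%:R|)%N; split; first exact: n0_small.
  by rewrite expn_gt0 n0_gt0.
by move=> u; exact: pow_torsion_bound.
Qed.

Lemma integral_powers_collide : exists R0 : nat, forall A, msmall 0 A ->
  exists i j, (i < j <= R0)%N /\ msmall 1 (A ^+ j - A ^+ i).
Proof.
have [rep repP] := residue_rep.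
set S2 := [seq (a, b) | a <- s, b <- s].
set S4 := [seq (p, q) | p <- S2, q <- S2].
exists (size S4) => A A0; have Ak k : msmall 0 (A ^+ k) by apply: msmallX.
set F := fun k => ((rep ((A ^+ k) 0 0), rep ((A ^+ k) 0 1)),
                   (rep ((A ^+ k) 1 0), rep ((A ^+ k) 1 1))).
have FS k : F k \in S4 by apply: allpairs_f; apply: allpairs_f; exact: (repP _ (Ak _ _ _)).1.
have [i [j [ijS [e00 e01 e10 e11]]]] := pigeonhole FS.
exists i, j; split => //.
have same_rep a b : rep ((A ^+ i) a b) = rep ((A ^+ j) a b) ->
    vsmall v 1 ((A ^+ j) a b - (A ^+ i) a b).
  move=> e; apply: (vsmall_sub_trans (z := rep ((A ^+ i) a b))).
    by rewrite e; exact: (repP _ (Ak _ _ _)).2.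
  exact: (repP _ (Ak _ _ _)).2.
by apply: msmall_entries; rewrite !mxE; apply: same_rep.
Qed.

Lemma companion_integral {t} : inO v t -> msmall 0 (companion t).
Proof.
move=> tO; apply: msmall_entries; rewrite !mxE /=; try by left.
- by apply: vsmallN; right; rewrite v1.
- by right; rewrite v1.
- exact: tO.
Qed.

(* For every integral t, some power C^r (0 < r <= R0) of the companion matrix
   C of X^2 - t X + 1 is congruent to 1 mod pi, with R0 independent of t:
   C has the integral inverse t - C, so C^j = C^i mod pi gives C^(j-i) = 1. *)
Lemma companion_congr_one : exists R0 : nat, forall t, inO v t ->
  exists2 r, (0 < r <= R0)%N & msmall 1 (companion t ^+ r - 1).
Proof.
have [R0 collide] := integral_powers_collide.
exists R0 => t tO; set C := companion t.
have [i [j [/andP [ij jR0] Cji]]] := collide C (companion_integral tO).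
exists (j - i)%N; first by rewrite subn_gt0 ij /=; exact: leq_trans (leq_subr _ _) jR0.
set D := t *: 1 - C.
have DC : D * C = 1 by rewrite /D mulrBl -scalerAl mul1r companion_sq opprB addrC subrK.
have DCk k : D ^+ k * C ^+ k = 1.
  elim: k => [|k IH]; first by rewrite !expr0 mulr1.
  by rewrite exprSr exprS mulrA -(mulrA _ D) DC mulr1.
have -> : C ^+ (j - i) - 1 = D ^+ i * (C ^+ j - C ^+ i).
  rewrite mulrBr DCk; congr (_ - _).
  by rewrite -(subnKC (ltnW ij)) exprD mulrA DCk mul1r addKn.
have Di : msmall 0 (D ^+ i).
  apply: msmallX; apply: msmallB; last exact: companion_integral.
  by have := msmallZ tO msmall1; rewrite addr0.
by have := msmallM Di Cji; rewrite add0r.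
Qed.

Lemma discrete_cyclic_near_one {h} : discrete_set v (cyclic_sub h) ->
  exists N0, forall m : nat, msmall N0 (h ^+ m - 1) -> h ^+ m = 1.
Proof.
move=> hdisc; have [N0 N0P] := hdisc 1 (ex_intro _ 0 erefl).
exists N0 => m hm; apply: N0P; first by exists m%:Z.
by move=> i j; move: (hm i j); rewrite !mxE.
Qed.

(* If det h = 1 and tr h = t, the powers of h are governed by those of the
   companion matrix C of t: h^m - 1 = a_m h - (a_(m-1) + 1), and a_m,
   a_(m-1) + 1 are entries of C^m - 1. *)
Lemma sl2_pow_close {h t} {B : int} {N} {m : nat} : \det h = 1 -> \tr h = t -> B <= 0 ->
  msmall B h -> msmall N (companion t ^+ m - 1) -> msmall (N + B) (h ^+ m - 1).
Proof.
move=> deth trh B0 hB Cm1.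
have sqh : h * h = t *: h - 1 by rewrite cayley_hamilton2 deth trh scale1r.
have [Cm10 Cm00] := companion_pow t m.
have a_small : vsmall v N (cheb t m).1.
  by have := Cm1 1 0; rewrite !mxE /= Cm10 mulr0n subr0.
have b_small : vsmall v N ((cheb t m).2 + 1).
  by have := Cm1 0 0; rewrite !mxE /= Cm00 mulr1n -opprD => /vsmallN; rewrite opprK.
have -> : h ^+ m - 1 = (cheb t m).1 *: h - ((cheb t m).2 + 1) *: 1.
  by rewrite (pow_cheb sqh) scalerDl scale1r opprD addrA.
apply: msmallB; first exact: msmallZ.
by apply: msmallW (msmallZ b_small msmall1) _; lia.
Qed.

(* Since 1 and a non-scalar h are independent, h^m = 1 forces a_m(t) = 0 and
   a_(m-1)(t) = -1, i.e. C^m = 1. *)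
Lemma sl2_pow_one_companion {h t} {m : nat} : \det h = 1 -> \tr h = t -> ~ scalar2 h ->
  h ^+ m = 1 -> companion t ^+ m = 1.
Proof.
move=> deth trh nsh hm1.
have sqh : h * h = t *: h - 1 by rewrite cayley_hamilton2 deth trh scale1r.
have [a0 b1] : (cheb t m).1 = 0 /\ (cheb t m).2 + 1 = 0.
  apply: (nonscalar_indep (a := (cheb t m).1) (c := (cheb t m).2 + 1) nsh).
  by rewrite scalerDl scale1r opprD addrA -(pow_cheb sqh) hm1 subrr.
rewrite (pow_cheb (companion_sq t)) a0 scale0r sub0r.
by move/eqP: b1; rewrite addr_eq0 => /eqP ->; rewrite scaleN1r opprK.
Qed.

Lemma uniform_trace_annihilator : exists2 L : nat, (0 < L)%N &
  forall h (B : int), B <= 0 -> \det h = 1 -> inO v (\tr h) -> msmall B h ->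
  discrete_set v (cyclic_sub h) -> ~ scalar2 h -> (cheb (\tr h) L).1 = 0.
Proof.
have [n0 [E [n0_small E_gt0 torsionE]]] := congruence_torsion.
have [R0 R0P] := companion_congr_one.
exists (R0`! * E)%N; first by rewrite muln_gt0 fact_gt0.
move=> h B B0 deth trO hB hdisc nsh; set t := \tr h.
have [r /andP [r_gt0 rR0] Cr1] := R0P t trO.
set u := companion t ^+ r.
have [N0 N0P] := discrete_cyclic_near_one hdisc.
set k := `|N0 - B|%N.
have hm1 : h ^+ (r * n0 ^ k) = 1.
  apply: N0P; have uk1 : msmall (k%:Z + 1) (companion t ^+ (r * n0 ^ k) - 1).
    by rewrite exprM; exact: pow_congr_iter.
  by apply: msmallW (sl2_pow_close deth erefl B0 hB uk1) _; lia.
have uk : u ^+ (n0 ^ k) = 1 by rewrite -exprM; exact: sl2_pow_one_companion hm1.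
have uE := torsionE u Cr1 (ex_intro _ k uk).
have [q ->] : exists q, R0`! = (r * q)%N.
  have /dvdnP [q ->] := dvdn_fact (m := r) (n := R0) (introT andP (conj r_gt0 rR0)).
  by exists q; rewrite mulnC.
rewrite -(companion_pow t _).1 mulnAC exprM exprM uE expr1n.
by rewrite mxE.
Qed.

Lemma msmall_tr N A : msmall N A -> vsmall v N (\tr A).
Proof. by move=> AN; rewrite tr2; apply: vsmallD. Qed.

Lemma near_bounded_integral A g (B : int) : B <= 0 -> msmall B g ->
  inO v (\tr g) -> msmall 0 (A - g) -> msmall B A /\ inO v (\tr A).
Proof.
move=> B0 gB trg Ag; split.
  by rewrite -(subrK g A); apply: msmallD => //; apply: msmallW Ag _.
by rewrite -(subrK g A) linearD /=; apply: vsmallD => //; apply: msmall_tr.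
Qed.

Lemma msmall_bounded A : exists2 B : int, B <= 0 & msmall B A.
Proof.
set B := \big[Order.min/0]_(ij : 'I_2 * 'I_2) v (A ij.1 ij.2).
exists B; first exact: bigmin_le_id.
move=> i j; have [->|Aij0] := eqVneq (A i j) 0; first by left.
by right; exact: (bigmin_le 0 (i, j) (fun ij : 'I_2 * 'I_2 => v (A ij.1 ij.2))).
Qed.

Lemma mx_conv_msmall (gs : nat -> 'M[K]_2) g : mx_conv v gs g ->
  forall N, exists n0 : nat, forall n, (n0 <= n)%N -> msmall N (gs n - g).
Proof.
move=> conv N; have /fin_all_exists [n0 n0P] : forall ij : 'I_2 * 'I_2,
    exists n0 : nat, forall n, (n0 <= n)%N -> vsmall v N (gs n ij.1 ij.2 - g ij.1 ij.2).
  by move=> [i j]; exact: conv.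
exists (\max_ij n0 ij) => n n0n i j; rewrite !mxE; apply: (n0P (i, j)).
by apply: leq_trans n0n; exact: leq_bigmax.
Qed.

Lemma vconv_trace (gs : nat -> 'M[K]_2) g : mx_conv v gs g -> vconv v (fun n => \tr (gs n)) (\tr g).
Proof.
move=> conv N; have [n0 n0P] := mx_conv_msmall conv N.
by exists n0 => n n0n; rewrite -linearB /=; apply: msmall_tr; exact: n0P.
Qed.

Lemma finite_separated (l : seq K) :
  exists N, forall x y, x \in l -> y \in l -> x != y -> ~ vsmall v N (x - y).
Proof.
have nonzero_not_small (D : seq K) : (forall d, d \in D -> d != 0) ->
    exists N, forall d, d \in D -> ~ vsmall v N d.
  elim: D => [|d D IH] D0; first by exists 0.
  have [N NP] := IH (fun e eD => D0 e (mem_behead (s := d :: D) eD)).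
  exists (Order.max N (v d + 1)) => e; rewrite inE => /orP [/eqP ->|eD] small.
    by apply: (vsmall_exact (D0 d (mem_head _ _))); apply: vsmallW small _; lia.
  by apply: (NP e eD); apply: vsmallW small _; lia.
have [N NP] : exists N, forall d, d \in [seq d <- [seq x - y | x <- l, y <- l] | d != 0] ->
    ~ vsmall v N d.
  by apply: nonzero_not_small => d; rewrite mem_filter => /andP [].
exists N => x y xl yl xy; apply: NP.
by rewrite mem_filter subr_eq0 xy /=; apply: allpairs_f.
Qed.

Lemma vconv_finite_constant (a : nat -> K) (l : K) (S : seq K) : vconv v a l ->
  (exists n0 : nat, forall n, (n0 <= n)%N -> a n \in S) ->
  exists N : nat, forall n, (N <= n)%N -> a n = a N.
Proof.
move=> conv [n0 aS]; have [Ns sep] := finite_separated S.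
have [n1 n1P] := conv Ns; set N := maxn n0 n1.
exists N => n Nn; apply: NNPP => ne.
apply: (sep (a n) (a N)); [apply: aS; lia | apply: aS; lia | exact/eqP |].
by apply: (vsmall_sub_trans (z := l)); apply: n1P; lia.
Qed.

End ValuedField.

Lemma trace_polynomial_neq0 (K : fieldType) (L : nat) : (0 < L)%N ->
  (cheb ('X : {poly K}) L).1 * ('X^2 - 4%:P) != 0.
Proof.
move=> L_gt0; have [monL _] := cheb_monic K L_gt0.
by rewrite mulf_neq0 // monic_neq0 // monicXnsubC.
Qed.

Theorem corollary4p2 (K : fieldType) (v : K -> int)
  (HK : nonarch_local_field v)
  (gs : nat -> 'M[K]_2) (g : 'M[K]_2) :
  (forall n, \det (gs n) = 1) ->
  (forall n, discrete_set v (cyclic_sub (gs n))) ->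
  \det g = 1 ->
  mx_conv v gs g ->
  elliptic v g ->
  exists N : nat, forall n, (N <= n)%N -> \tr (gs n) = \tr (gs N).
Proof.
move=> det_gs disc_gs detg conv ell.
case: HK => v_mul v_add _ _ [s [_ s_res]].
have [L L_gt0 annihilate] := uniform_trace_annihilator v_mul v_add s_res.
have [roots rootsP] := poly_roots_finite (trace_polynomial_neq0 K L_gt0).
have trg := elliptic_trace_integral v_mul v_add detg ell.
have [B B0 gB] := msmall_bounded v g.
have [n0 n0P] := mx_conv_msmall conv 0.
have eventually_roots : exists n0 : nat, forall n, (n0 <= n)%N -> \tr (gs n) \in roots.
  exists n0 => n n0n; apply: rootsP; rewrite rootM.
  have [gsB trO] := near_bounded_integral v_add B0 gB trg (n0P n n0n).
  case: (classic (scalar2 (gs n))) => [gs_scalar|gs_nonscalar].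
    by rewrite /root !hornerE scalar2_trace // subrr eqxx orbT.
  by rewrite /root (cheb_horner _ _).1 (annihilate _ B) ?eqxx.
exact: (vconv_finite_constant v_mul v_add (vconv_trace v_add conv) eventually_roots).
Qed.
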